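(* Let $V$ be a Whittaker module of type $\eta$ over $R$ with cyclic Whittaker vector $w$. If $Z_V=(p(\Omega))$ with $p\neq0$ a monic polynomial of degree $n$, then $\{F^iH^jw : 0\le i\le n-1,\ j\in\mathbb{Z}_{\ge0}\}$ is a $\mathbb{C}$-basis of $V$. If $Z_V=0$, then $\{F^iH^jw : i,j\in\mathbb{Z}_{\ge0}\}$ is a $\mathbb{C}$-basis of $V$.
   Context: Let $f\in\mathbb{C}[H]$ be a polynomial. $R=R(f)$ is the associative $\mathbb{C}$-algebra generated by $E,F,H$ with relations $EF-FE=f(H)$, $HE-EH=E$, $HF-FH=-F$. Let $u\in\mathbb{C}[H]$ satisfy $f(H)=\tfrac12(u(H+1)-u(H))$ and $\Omega=2FE+u(H+1)$; the center $Z(R)$ is the polynomial ring $\mathbb{C}[\Omega]$. Let $R(E)=\mathbb{C}[E]$ and fix an algebra homomorphism $\eta:R(E)\to\mathbb{C}$ with $\eta(E)\neq0$. A vector $v$ of an $R$-module $V$ is a Whittaker vector of type $\eta$ if $Ev=\eta(E)v$; $V$ is a Whittaker module of type $\eta$ with cyclic Whittaker vector $w$ if $w$ is a Whittaker vector and $V=Rw$. $Z_V=\mathrm{Ann}_R(V)\cap Z(R)$. *)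

From HB Require Import structures.
From mathcomp Require Import all_boot all_order all_algebra.
From mathcomp Require Import complex Rstruct.
Set Implicit Arguments. Unset Strict Implicit. Unset Printing Implicit Defensive.
Import Order.TTheory GRing.Theory Num.Theory.
Local Open Scope ring_scope.

Notation CC := (complex Rdefinitions.R).

Section Defs.
Variable V : lmodType CC.

Definition poly_op (q : {poly CC}) (A : V -> V) (v : V) : V :=
  \sum_(i < size q) q`_i *: iter i A v.

(* V, equipped with the operators E F H, is a module over
   R(f) = C<E,F,H>/(EF-FE=f(H), HE-EH=E, HF-FH=-F). *)
Definition is_Rf_module (f : {poly CC}) (E F H : {linear V -> V}) : Prop :=
  [/\ forall v, E (F v) - F (E v) = poly_op f H v,
      forall v, H (E v) - E (H v) = E v &
      forall v, H (F v) - F (H v) = - F v].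

Definition Omega_op (u : {poly CC}) (E F H : {linear V -> V}) (v : V) : V :=
  2%:R *: F (E v) + poly_op (u \Po ('X + 1)) H v.

(* V = R w : the only subspace containing w and stable under E, F, H
   is V itself. *)
Definition cyclic_vector (E F H : {linear V -> V}) (w : V) : Prop :=
  forall S : V -> Prop,
    S w -> S 0 -> (forall x y, S x -> S y -> S (x + y)) ->
    (forall (c : CC) x, S x -> S (c *: x)) ->
    (forall x, S x -> S (E x)) -> (forall x, S x -> S (F x)) ->
    (forall x, S x -> S (H x)) ->
    forall v, S v.

Definition whittaker_module (E F H : {linear V -> V}) (eta : CC) (w : V) : Prop :=
  E w = eta *: w /\ cyclic_vector E F H w.

Definition is_basis_on (I : eqType) (P : pred I) (b : I -> V) : Prop :=
  (forall (s : seq I) (c : I -> CC),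
      uniq s -> all P s -> \sum_(i <- s) c i *: b i = 0 ->
      forall i, i \in s -> c i = 0) /\
  (forall v, exists (s : seq I) (c : I -> CC),
      all P s /\ v = \sum_(i <- s) c i *: b i).

(* The polynomial q in Omega lies in Z_V = Ann_R(V) ∩ Z(R) (Z(R) = C[Omega]). *)
Definition in_ZV (u : {poly CC}) (E F H : {linear V -> V}) (q : {poly CC}) : Prop :=
  forall v, poly_op q (Omega_op u E F H) v = 0.

End Defs.

From HB Require Import structures.
From mathcomp Require Import all_boot all_order all_algebra.
From mathcomp Require Import complex Rstruct.
Import Order.TTheory GRing.Theory Num.Theory.
Local Open Scope ring_scope.

(* Omega is central, and E acts on Omega^k g(H) w as eta Omega^k g(H - 1) w, so E - eta
   lowers the H-degree of a relation sum_k Omega^k Q_k(H) w = 0 until every Q_k is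
   constant; the relation then reads r(Omega) w = 0, and r lies in Z_V because w is
   cyclic.  Hence the Omega^k H^j w are free for k below deg p (for all k if Z_V = 0),
   and they span since p(Omega) = 0 on V.  Finally Omega w = 2 eta F w + u(H + 1) w,
   so F^k g(H) w = (2 eta)^-k Omega^k g(H + k) w modulo lower powers of Omega, which
   transfers both properties from the Omega^k H^j w to the F^k H^j w. *)

Section BackwardDifference.
Context {R : idomainType}.
Implicit Type g : {poly R}.

Definition backdiff g := g \Po ('X - 1) - g.

Lemma size_comp_Xsub1 g : size (g \Po ('X - 1)) = size g.
Proof. by rewrite size_comp_poly2 // -polyC1 size_XsubC. Qed.

Lemma size_backdiff g : (size (backdiff g) <= (size g).-1)%N.
Proof.
have [->|g_neq0] := eqVneq g 0; first by rewrite /backdiff comp_poly0 subr0 size_poly0.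
have lead_shift : lead_coef (g \Po ('X - 1)) = lead_coef g.
  by rewrite lead_coef_comp -polyC1 ?size_XsubC // lead_coefXsubC expr1n mulr1.
apply/leq_sizeP => j; rewrite leq_eqVlt => /predU1P[<-|lt_j]; rewrite coefB.
  by rewrite -[X in _ - X]lead_coefE -size_comp_Xsub1 -lead_coefE lead_shift subrr.
have le_j := leq_trans (leqSpred _) lt_j.
by rewrite !nth_default ?subrr ?size_comp_Xsub1.
Qed.

End BackwardDifference.

Lemma backdiff_eq0 (R : numDomainType) (g : {poly R}) : backdiff g = 0 -> g = (g`_0)%:P.
Proof.
move=> /eqP; rewrite subr_eq0 => /eqP g_shift.
have g_nat k : g.[k%:R] = g.[0].
  elim: k => // k IH; rewrite mulrSr -IH -{1}g_shift horner_comp !hornerE.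
  by rewrite addrK.
pose h := g - (g`_0)%:P.
have h_nat k : root h k%:R by rewrite /root !hornerE g_nat horner_coef0 subrr.
suff /eqP : h = 0 by rewrite subr_eq0 => /eqP.
apply: (@roots_geq_poly_eq0 _ h [seq k%:R | k <- iota 0 (size h)]).
- by apply/allP => _ /mapP[k _ ->].
- by rewrite map_inj_uniq ?iota_uniq // => a b /eqP; rewrite eqr_nat => /eqP.
- by rewrite size_map size_iota.
Qed.

Section Shift.
Context {R : nzRingType}.
Implicit Type p : {poly R}.

Lemma comp_polyXadd1_K p : (p \Po ('X + 1)) \Po ('X - 1) = p.
Proof. by have := comp_polyXaddC_K p 1; rewrite polyC1. Qed.

Lemma comp_polyXsub1_K p : (p \Po ('X - 1)) \Po ('X + 1) = p.
Proof. by have := comp_polyXaddC_K p (-1); rewrite polyCN opprK polyC1. Qed.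

End Shift.

Lemma comp_polyXaddC_comp (R : comNzRingType) (p : {poly R}) a b :
  (p \Po ('X + a%:P)) \Po ('X + b%:P) = p \Po ('X + (a + b)%:P).
Proof. by rewrite -comp_polyA comp_polyD comp_polyX comp_polyC -addrA -polyCD (addrC b). Qed.

Lemma iter_morph {T U : Type} {S : T -> U} {A : T -> T} {B : U -> U} k :
  {morph S : x / A x >-> B x} -> {morph S : x / iter k A x >-> iter k B x}.
Proof. by move=> SAB x; elim: k => //= k <-. Qed.

Section IterLinear.
Variables (R : pzRingType) (V : lmodType R) (A : {linear V -> V}).

Lemma iter_is_linear k : linear (iter k A).
Proof. by elim: k => [|k IH] a x y //=; rewrite IH linearP. Qed.

HB.instance Definition _ k :=
  GRing.isLinear.Build R V V *:%R (iter k A) (iter_is_linear k).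

End IterLinear.

Section PolyOp.
Context {V : lmodType CC}.
Implicit Types (p q r : {poly CC}) (A : V -> V) (v : V).

Lemma poly_op_widen N q A v : (size q <= N)%N ->
  poly_op q A v = \sum_(i < N) q`_i *: iter i A v.
Proof.
move=> le_qN; rewrite /poly_op (big_ord_widen N (fun i => q`_i *: iter i A v)) //.
rewrite big_mkcond; apply: eq_bigr => i _.
by case: ltnP => // ge_iq; rewrite nth_default ?scale0r.
Qed.

Lemma poly_op0 A v : poly_op 0 A v = 0.
Proof. by rewrite /poly_op size_poly0 big_ord0. Qed.

Lemma poly_opD p q A v : poly_op (p + q) A v = poly_op p A v + poly_op q A v.
Proof.
rewrite !(poly_op_widen (maxn (size p) (size q))) ?leq_maxl ?leq_maxr ?size_polyD //.
by rewrite -big_split; apply: eq_bigr => i _; rewrite coefD scalerDl.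
Qed.

Lemma poly_opZ c q A v : poly_op (c *: q) A v = c *: poly_op q A v.
Proof.
rewrite (poly_op_widen (size q)) ?size_scale_leq // /poly_op scaler_sumr.
by apply: eq_bigr => i _; rewrite coefZ scalerA.
Qed.

Lemma poly_opN q A v : poly_op (- q) A v = - poly_op q A v.
Proof. by rewrite -(scaleN1r q) poly_opZ scaleN1r. Qed.

Lemma poly_opB p q A v : poly_op (p - q) A v = poly_op p A v - poly_op q A v.
Proof. by rewrite poly_opD poly_opN. Qed.

Lemma poly_opC c A v : poly_op c%:P A v = c *: v.
Proof. by rewrite (poly_op_widen 1) ?size_polyC_leq1 // big_ord1 coefC. Qed.

Lemma poly_opMX q A v : poly_op (q * 'X) A v = poly_op q A (A v).
Proof.
rewrite (poly_op_widen (size q).+1); last first.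
  by rewrite (leq_trans (size_polyMleq _ _)) // size_polyX addn2.
rewrite big_ord_recl coefMX eqxx scale0r add0r.
by apply: eq_bigr => i _; rewrite coefMX /= -iterSr.
Qed.

Lemma poly_opXaddC c A v : poly_op ('X + c%:P) A v = A v + c *: v.
Proof. by rewrite poly_opD poly_opC -['X]mul1r poly_opMX -polyC1 poly_opC scale1r. Qed.

Lemma poly_op_morph {T : {linear V -> V}} {A B} q :
  {morph T : x / A x >-> B x} -> {morph T : x / poly_op q A x >-> poly_op q B x}.
Proof.
move=> TAB x; rewrite /poly_op linear_sum; apply: eq_bigr => i _.
by rewrite linearZZ (iter_morph _ TAB).
Qed.

Section LinearOp.
Variable A : {linear V -> V}.

Lemma poly_op_is_linear q : linear (poly_op q A).
Proof.
move=> a x y; rewrite /poly_op scaler_sumr -big_split /=.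
by apply: eq_bigr => i _; rewrite linearP scalerDr !scalerA mulrC.
Qed.

HB.instance Definition _ q :=
  GRing.isLinear.Build CC V V *:%R (poly_op q A) (poly_op_is_linear q).

Lemma poly_op_comm q v : A (poly_op q A v) = poly_op q A (A v).
Proof. exact: poly_op_morph. Qed.

Lemma poly_opM p q v : poly_op (p * q) A v = poly_op p A (poly_op q A v).
Proof.
elim/poly_ind: p q v => [|p c IH] q v; first by rewrite mul0r !poly_op0.
rewrite mulrDl -mulrA -(commr_polyX q) poly_opD mul_polyC poly_opZ IH.
by rewrite poly_opD poly_opC !poly_opMX poly_op_comm.
Qed.

Lemma poly_op_comp p r v : poly_op (p \Po r) A v = poly_op p (poly_op r A) v.
Proof.
elim/poly_ind: p v => [|p c IH] v; first by rewrite comp_poly0 !poly_op0.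
by rewrite comp_poly_MXaddC !poly_opD !poly_opC poly_opM IH poly_opMX.
Qed.

End LinearOp.

Lemma Omega_op_is_linear u (E F H : {linear V -> V}) : linear (Omega_op u E F H).
Proof.
move=> a x y; rewrite /Omega_op [E _]linearP [F _]linearP [poly_op _ _ _]linearP.
by rewrite !scalerDr !scalerA (mulrC a) addrACA.
Qed.

HB.instance Definition _ u E F H :=
  GRing.isLinear.Build CC V V *:%R (Omega_op u E F H) (Omega_op_is_linear u E F H).

End PolyOp.

Definition poly_span {V : lmodType CC} (H X : V -> V) (w : V) m x :=
  exists Q : nat -> {poly CC}, x = \sum_(k < m) iter k X (poly_op (Q k) H w).

Definition grid m N := [seq (i, j) | i <- iota 0 m, j <- iota 0 N].

Section PolySpan.
Context {V : lmodType CC} {H : V -> V} {X : {linear V -> V}} {w : V}.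
Local Notation Xspan := (poly_span H X w).

Lemma poly_span0 m : Xspan m 0.
Proof. by exists (fun=> 0); rewrite big1 // => k _; rewrite poly_op0 linear0. Qed.

Lemma poly_spanD m x y : Xspan m x -> Xspan m y -> Xspan m (x + y).
Proof.
move=> [Q ->] [Q' ->]; exists (fun k => Q k + Q' k).
by rewrite -big_split; apply: eq_bigr => k _; rewrite poly_opD linearD.
Qed.

Lemma poly_spanZ m c x : Xspan m x -> Xspan m (c *: x).
Proof.
move=> [Q ->]; exists (fun k => c *: Q k).
by rewrite scaler_sumr; apply: eq_bigr => k _; rewrite poly_opZ linearZZ.
Qed.

Lemma poly_spanN m x : Xspan m x -> Xspan m (- x).
Proof. by rewrite -scaleN1r; apply: poly_spanZ. Qed.

Lemma poly_spanB m x y : Xspan m x -> Xspan m y -> Xspan m (x - y).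
Proof. by move=> sx sy; apply/poly_spanD/poly_spanN. Qed.

Lemma poly_span_sum m (I : Type) (r : seq I) (P : pred I) (G : I -> V) :
  (forall i, P i -> Xspan m (G i)) -> Xspan m (\sum_(i <- r | P i) G i).
Proof. by move=> sG; apply: big_ind => //; [apply: poly_span0 | apply: poly_spanD]. Qed.

Lemma poly_span_widen m m' x : (m <= m')%N -> Xspan m x -> Xspan m' x.
Proof.
move=> le_mm' [Q ->]; exists (fun k => if (k < m)%N then Q k else 0).
rewrite (big_ord_widen m' (fun k => iter k X (poly_op (Q k) H w))) // big_mkcond.
by apply: eq_bigr => k _; case: ifP => // _; rewrite poly_op0 linear0.
Qed.

Lemma poly_span_gen m k g : (k < m)%N -> Xspan m (iter k X (poly_op g H w)).
Proof.
move=> lt_km; exists (fun j => if j == k then g else 0).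
rewrite (bigD1 (Ordinal lt_km)) //= eqxx big1 ?addr0 // => j /negbTE.
by rewrite -val_eqE /= => ->; rewrite poly_op0 linear0.
Qed.

Lemma poly_span_w m : (0 < m)%N -> Xspan m w.
Proof. by move=> m_gt0; have := poly_span_gen m 0 1%:P m_gt0; rewrite poly_opC scale1r. Qed.

Lemma poly_span_X m x : Xspan m x -> Xspan m.+1 (X x).
Proof.
move=> [Q ->]; rewrite linear_sum; apply: poly_span_sum => k _.
exact: (poly_span_gen m.+1 k.+1 _ (ltn_ord k)).
Qed.

Lemma sum_grid m N (Q : nat -> {poly CC}) (a : nat * nat -> CC) :
  (forall k, (k < m)%N -> (size (Q k) <= N)%N) ->
  (forall i j, (i < m)%N -> (j < N)%N -> (Q i)`_j = a (i, j)) ->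
  \sum_(k < m) iter k X (poly_op (Q k) H w) =
  \sum_(ij <- grid m N) a ij *: iter ij.1 X (iter ij.2 H w).
Proof.
move=> size_Q coef_Q; rewrite big_allpairs.
rewrite -(big_mkord xpredT (fun k => iter k X (poly_op (Q k) H w))) /index_iota subn0.
apply: eq_big_seq => i; rewrite mem_iota leq0n add0n => lt_im.
rewrite (poly_op_widen N) ?size_Q // linear_sum.
rewrite -(big_mkord xpredT (fun j => iter i X ((Q i)`_j *: iter j H w))) /index_iota subn0.
apply: eq_big_seq => j; rewrite mem_iota leq0n add0n => lt_jN.
by rewrite linearZZ coef_Q.
Qed.

Lemma poly_span_grid m x : Xspan m x -> exists s (c : nat * nat -> CC),
  all (fun ij => ij.1 < m)%N s /\ x = \sum_(ij <- s) c ij *: iter ij.1 X (iter ij.2 H w).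
Proof.
move=> [Q ->]; set N := \max_(k < m) size (Q k).
exists (grid m N), (fun ij => (Q ij.1)`_ij.2); split.
  by apply/allP => _ /allpairsP[[i j] [+ _ ->]]; rewrite mem_iota.
apply: sum_grid => // k lt_km.
exact: (@leq_bigmax _ (fun k : 'I_m => size (Q k)) (Ordinal lt_km)).
Qed.

Lemma grid_poly_span m s (c : nat * nat -> CC) :
  uniq s -> all (fun ij => ij.1 < m)%N s -> exists Q : nat -> {poly CC},
  \sum_(ij <- s) c ij *: iter ij.1 X (iter ij.2 H w) =
    \sum_(k < m) iter k X (poly_op (Q k) H w) /\
  forall ij, ij \in s -> c ij = (Q ij.1)`_ij.2.
Proof.
move=> uniq_s /allP s_m; set N := (\max_(ij <- s) ij.2).+1.
have s_N ij : ij \in s -> (ij.2 < N)%N by move=> s_ij; rewrite ltnS leq_bigmax_seq.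
pose a ij := if ij \in s then c ij else 0.
exists (fun i => \poly_(j < N) a (i, j)); split; last first.
  by move=> [i j] s_ij; rewrite coef_poly s_N // /a s_ij.
rewrite (sum_grid m N (fun i => \poly_(j < N) a (i, j)) a) => [|k _|i j _ lt_jN]; last 2 first.
- exact: size_poly.
- by rewrite coef_poly lt_jN.
rewrite [RHS](eq_bigr (fun ij => if ij \in s then c ij *: iter ij.1 X (iter ij.2 H w) else 0));
  last by move=> ij _; rewrite /a; case: (ij \in s); rewrite ?scale0r.
rewrite -big_mkcond -big_filter; apply: perm_big; apply: uniq_perm => //.
  by rewrite filter_uniq // allpairs_uniq ?iota_uniq // => -[? ?] [? ?].
move=> [i j]; rewrite mem_filter andb_idr // => s_ij.
by apply: allpairs_f; rewrite mem_iota leq0n add0n ?(s_m _ s_ij) ?(s_N _ s_ij).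
Qed.

Lemma poly_span_basis (P : pred nat) :
  (forall i j, (i <= j)%N -> P j -> P i) ->
  (forall m (Q : nat -> {poly CC}), (forall i, (i < m)%N -> P i) ->
     \sum_(k < m) iter k X (poly_op (Q k) H w) = 0 -> forall k, (k < m)%N -> Q k = 0) ->
  (forall v, exists2 m, (forall i, (i < m)%N -> P i) & Xspan m v) ->
  is_basis_on (fun ij : nat * nat => P ij.1) (fun ij => iter ij.1 X (iter ij.2 H w)).
Proof.
move=> P_down free spanning; split=> [s c uniq_s /allP s_P sum0 ij s_ij | v].
  set m := \max_(ij <- s) ij.1.+1.
  have s_m : all (fun ij => ij.1 < m)%N s.
    by apply/allP => ij' s_ij'; apply: leq_bigmax_seq.
  have P_m i : (i < m)%N -> P i.
    move=> lt_im; have /hasP[ij' s_ij' le_i] : has (fun ij' => i <= ij'.1)%N s.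
      apply: contraLR lt_im => /hasPn gt_i; rewrite -leqNgt.
      by apply/bigmax_leqP_seq => ij' /gt_i; rewrite -ltnNge.
    exact: P_down le_i (s_P _ s_ij').
  have [Q [sumQ ->//]] := grid_poly_span _ _ c uniq_s s_m.
  by rewrite (free m Q P_m) ?coef0 -?sumQ //; apply: (allP s_m).
have [m P_m /poly_span_grid[s [c [s_m ->]]]] := spanning v.
by exists s, c; split=> //; apply/allP => ij /(allP s_m) /P_m.
Qed.

End PolySpan.

Lemma poly_span_map {V : lmodType CC} {H : V -> V} {X Y : {linear V -> V}} {w : V}
    (T : {linear V -> V}) m m' x :
  (forall k g, (k < m)%N -> poly_span H Y w m' (T (iter k X (poly_op g H w)))) ->
  poly_span H X w m x -> poly_span H Y w m' (T x).
Proof.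
by move=> TXY [Q ->]; rewrite linear_sum; apply: poly_span_sum => k _; apply: TXY.
Qed.

Lemma poly_span_sub {V : lmodType CC} {H : V -> V} {X Y : {linear V -> V}} {w : V} :
  (forall j x, poly_span H Y w j x -> poly_span H Y w j.+1 (X x)) ->
  forall m x, poly_span H X w m x -> poly_span H Y w m x.
Proof.
move=> XY m x; apply: (poly_span_map idfun) => k g lt_km /=.
apply: (poly_span_widen (k + 1)); first by rewrite addn1.
elim: k {lt_km} => [|k IH]; first exact: (poly_span_gen 1 0 g).
exact: XY.
Qed.

Section WhittakerModule.
Context {f u : {poly CC}} {V : lmodType CC} {E F H : {linear V -> V}} {eta : CC} {w : V}.
Hypotheses (RfV : is_Rf_module f E F H) (f_u : f = 2%:R^-1 *: (u \Po ('X + 1) - u)).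
Hypotheses (eta_neq0 : eta != 0) (whittaker_w : whittaker_module E F H eta w).

Local Notation Om := (Omega_op u E F H).
Local Notation Ospan := (poly_span H Om w).
Local Notation Fspan := (poly_span H F w).

Let Ew : E w = eta *: w := proj1 whittaker_w.

Lemma E_H x : E (H x) = H (E x) - E x.
Proof. by case: RfV => _ HE _; rewrite -[X in _ - X](HE x) opprB addrC subrK. Qed.

Lemma F_H x : F (H x) = H (F x) + F x.
Proof. by case: RfV => _ _ HF; rewrite -[X in _ + X]opprK -(HF x) opprB addrC subrK. Qed.

Lemma E_F x : E (F x) = F (E x) + poly_op f H x.
Proof. by case: RfV => EF _ _; rewrite -(EF x) addrC subrK. Qed.

Lemma E_poly g x : E (poly_op g H x) = poly_op (g \Po ('X - 1)) H (E x).
Proof.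
rewrite poly_op_comp; apply: poly_op_morph => y.
by rewrite E_H -polyC1 -polyCN poly_opXaddC scaleN1r.
Qed.

Lemma F_poly g x : F (poly_op g H x) = poly_op (g \Po ('X + 1)) H (F x).
Proof.
rewrite poly_op_comp; apply: poly_op_morph => y.
by rewrite F_H -polyC1 poly_opXaddC scale1r.
Qed.

Lemma H_Omega x : H (Om x) = Om (H x).
Proof.
rewrite /Omega_op E_H linearB F_H addrK [H (_ + _)]linearD [H (_ *: _)]linearZZ.
by rewrite poly_op_comm.
Qed.

Lemma E_Omega x : E (Om x) = Om (E x).
Proof.
rewrite /Omega_op [E (_ + _)]linearD [E (_ *: _)]linearZZ E_F E_poly scalerDr -addrA.
rewrite -poly_opZ -poly_opD; congr (_ + poly_op _ _ _).
by rewrite f_u scalerA mulfV ?pnatr_eq0 // scale1r comp_polyXadd1_K subrK.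
Qed.

Lemma F_Omega x : F (Om x) = Om (F x).
Proof.
rewrite /Omega_op E_F [F (_ + _)]linearD [F (_ + _)]linearD [F (_ *: _)]linearZZ.
rewrite scalerDr !F_poly -addrA -poly_opZ -poly_opD; congr (_ + poly_op _ _ _).
by rewrite f_u comp_polyZ scalerA mulfV ?pnatr_eq0 // scale1r comp_polyB subrK.
Qed.

Lemma in_ZV_annihilator r : poly_op r Om w = 0 -> in_ZV u E F H r.
Proof.
case: whittaker_w => _ cyclic_w r_w.
have r_stable (T : {linear V -> V}) : {morph T : x / Om x >-> Om x} ->
    forall x, poly_op r Om x = 0 -> poly_op r Om (T x) = 0.
  by move=> T_Om x /(congr1 T); rewrite linear0 (poly_op_morph _ T_Om).
apply: (cyclic_w (fun v => poly_op r Om v = 0)) => // [|x y r_x r_y|c x r_x|||].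
- exact: linear0.
- by rewrite linearD /= r_x r_y addr0.
- by rewrite linearZZ /= r_x scaler0.
- exact: r_stable E_Omega.
- exact: r_stable F_Omega.
- exact: r_stable H_Omega.
Qed.

Lemma Omega_poly g x : Om (poly_op g H x) = poly_op g H (Om x).
Proof. by apply: poly_op_morph => y; rewrite H_Omega. Qed.

Lemma poly_F g x : poly_op g H (F x) = F (poly_op (g \Po ('X - 1)) H x).
Proof. by rewrite F_poly comp_polyXsub1_K. Qed.

Lemma Omega_w : Om w = (2%:R * eta) *: F w + poly_op (u \Po ('X + 1)) H w.
Proof. by rewrite /Omega_op Ew linearZZ scalerA. Qed.

Lemma F_poly_w g : F (poly_op g H w) = (2%:R * eta)^-1 *:
  (Om (poly_op (g \Po ('X + 1)) H w) - poly_op ((g \Po ('X + 1)) * (u \Po ('X + 1))) H w).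
Proof.
rewrite Omega_poly Omega_w [poly_op _ _ (_ + _)]linearD /= linearZZ poly_opM addrK scalerA.
by rewrite mulVf ?mulf_neq0 ?pnatr_eq0 // scale1r F_poly.
Qed.

Lemma E_omega_gen k g :
  E (iter k Om (poly_op g H w)) = eta *: iter k Om (poly_op (g \Po ('X - 1)) H w).
Proof. by rewrite (iter_morph _ E_Omega) E_poly Ew !linearZZ. Qed.

Lemma E_omega_span m x : Ospan m x -> Ospan m (E x).
Proof.
apply: (poly_span_map E) => k g lt_km.
by rewrite E_omega_gen; apply/poly_spanZ/poly_span_gen.
Qed.

Lemma H_omega_span m x : Ospan m x -> Ospan m (H x).
Proof.
apply: (poly_span_map H) => k g lt_km.
by rewrite (iter_morph _ H_Omega) poly_op_comm -poly_opMX; apply: poly_span_gen.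
Qed.

Lemma F_omega_span m x : Ospan m x -> Ospan m.+1 (F x).
Proof.
apply: (poly_span_map F) => k g lt_km.
rewrite (iter_morph _ F_Omega) F_poly_w !linearZZ linearB /= -iterSr.
by apply/poly_spanZ/poly_spanB; apply: poly_span_gen; rewrite ?ltnS // ltnW.
Qed.

Lemma Omega_F_span m x : Fspan m x -> Fspan m.+1 (Om x).
Proof.
apply: (poly_span_map Om) => i h lt_im /=.
rewrite (iter_morph _ (fun y => esym (F_Omega y))) Omega_poly Omega_w linearP /=.
rewrite -poly_opM poly_F linearP /= -iterSr.
by apply/poly_spanD; [apply/poly_spanZ|]; apply: poly_span_gen; rewrite ?ltnS // ltnW.
Qed.

Lemma Fspan_sub_Ospan m x : Fspan m x -> Ospan m x.
Proof. exact: (poly_span_sub (Y := Om) F_omega_span). Qed.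

Lemma Ospan_sub_Fspan m x : Ospan m x -> Fspan m x.
Proof. exact: (poly_span_sub (X := Om) Omega_F_span). Qed.

Lemma omega_span_exhaustive v : exists m, Ospan m v.
Proof.
case: whittaker_w => _ cyclic_w; move: v.
apply: (cyclic_w (fun v => exists m, Ospan m v)).
- by exists 1%N; apply: poly_span_w.
- by exists 0%N; apply: poly_span0.
- move=> x y [m1 x_m1] [m2 y_m2]; exists (maxn m1 m2); apply: poly_spanD.
    by apply: poly_span_widen x_m1; apply: leq_maxl.
  by apply: poly_span_widen y_m2; apply: leq_maxr.
- by move=> c x [m x_m]; exists m; apply: poly_spanZ.
- by move=> x [m x_m]; exists m; apply: E_omega_span.
- by move=> x [m x_m]; exists m.+1; apply: F_omega_span.
- by move=> x [m x_m]; exists m; apply: H_omega_span.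
Qed.

Lemma omega_span_free n : (forall r, in_ZV u E F H r -> (size r <= n)%N -> r = 0) ->
  forall Q : nat -> {poly CC},
  \sum_(k < n) iter k Om (poly_op (Q k) H w) = 0 -> forall k, (k < n)%N -> Q k = 0.
Proof.
move=> ZV_n Q; have [d] : exists d, forall k, (k < n)%N -> (size (Q k) <= d)%N.
  exists (\max_(k < n) size (Q k)) => k lt_kn.
  exact: (@leq_bigmax _ (fun k : 'I_n => size (Q k)) (Ordinal lt_kn)).
elim: d Q => [|d IH] Q size_Q sum0 k lt_kn; first exact/size_poly_leq0P/size_Q.
have backdiff_Q0 j : (j < n)%N -> backdiff (Q j) = 0.
  apply: (IH (fun i => backdiff (Q i))) => [i lt_in|].
    by rewrite (leq_trans (size_backdiff _)) // -subn1 leq_subLR add1n size_Q.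
  have : E (\sum_(i < n) iter i Om (poly_op (Q i) H w)) -
      eta *: \sum_(i < n) iter i Om (poly_op (Q i) H w) =
      eta *: \sum_(i < n) iter i Om (poly_op (backdiff (Q i)) H w).
    rewrite linear_sum !scaler_sumr -sumrB; apply: eq_bigr => i _ /=.
    by rewrite E_omega_gen poly_opB linearB scalerBr.
  rewrite sum0 linear0 scaler0 subr0 => /esym/eqP.
  by rewrite scaler_eq0 (negbTE eta_neq0) => /eqP.
have Q_const j : (j < n)%N -> Q j = ((Q j)`_0)%:P by move=> lt_jn; apply/backdiff_eq0/backdiff_Q0.
pose r := \poly_(j < n) (Q j)`_0.
have r0 : r = 0.
  apply: ZV_n (size_poly _ _); apply: in_ZV_annihilator.
  rewrite -sum0 (poly_op_widen n) ?size_poly //; apply: eq_bigr => j _.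
  by rewrite /r coef_poly ltn_ord [in RHS]Q_const // poly_opC linearZZ.
have := congr1 (fun p : {poly CC} => p`_k) r0; rewrite coef_poly lt_kn coef0 => Qk0.
by rewrite Q_const // Qk0.
Qed.

Lemma iterF_triangular m g : Ospan m (iter m F (poly_op g H w) -
  ((2%:R * eta)^-1) ^+ m *: iter m Om (poly_op (g \Po ('X + m%:R%:P)) H w)).
Proof.
elim: m g => [|m IH] g.
  by rewrite /= polyC0 addr0 comp_polyXr expr0 scale1r subrr; apply: poly_span0.
pose c := (2%:R * eta)^-1; pose g1 := g \Po ('X + 1).
have -> : iter m.+1 F (poly_op g H w) -
    c ^+ m.+1 *: iter m.+1 Om (poly_op (g \Po ('X + m.+1%:R%:P)) H w) =
  c *: Om (iter m F (poly_op g1 H w) - c ^+ m *: iter m Om (poly_op (g1 \Po ('X + m%:R%:P)) H w))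
  - c *: iter m F (poly_op (g1 * (u \Po ('X + 1))) H w).
  rewrite iterSr F_poly_w -/c -/g1 linearZZ linearB /= -(iter_morph _ (fun y => esym (F_Omega y))).
  rewrite [Om (_ - _)]linearB /= [Om (_ *: _)]linearZZ !scalerBr scalerA -exprS.
  by rewrite /g1 -polyC1 comp_polyXaddC_comp -mulrS addrAC.
apply/poly_spanB/poly_spanZ; first by apply/poly_spanZ/poly_span_X/IH.
by apply: Fspan_sub_Ospan; apply: poly_span_gen.
Qed.

Lemma omega_top_free m g : (forall r, in_ZV u E F H r -> (size r <= m.+1)%N -> r = 0) ->
  Ospan m (iter m Om (poly_op g H w)) -> g = 0.
Proof.
move=> ZV_m [R sumR]; apply/eqP; rewrite -oppr_eq0; apply/eqP.
pose Q k := if (k < m)%N then R k else - g.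
have sumQ : \sum_(k < m.+1) iter k Om (poly_op (Q k) H w) = 0.
  rewrite big_ord_recr /= /Q ltnn (eq_bigr (fun k : 'I_m => iter k Om (poly_op (R k) H w)));
    last by move=> k _; rewrite ltn_ord.
  by rewrite -sumR poly_opN linearN addrN.
by have := omega_span_free _ ZV_m Q sumQ m (ltnSn m); rewrite /Q ltnn.
Qed.

Lemma F_span_free m : (forall r, in_ZV u E F H r -> (size r <= m)%N -> r = 0) ->
  forall Q : nat -> {poly CC},
  \sum_(i < m) iter i F (poly_op (Q i) H w) = 0 -> forall i, (i < m)%N -> Q i = 0.
Proof.
elim: m => [//|m IH] ZV_m Q; rewrite big_ord_recr /= => sum0.
pose c := (2%:R * eta)^-1; pose Qm := Q m \Po ('X + m%:R%:P).
have Qm0 : Q m = 0.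
  have top : Ospan m (c ^+ m *: iter m Om (poly_op Qm H w)).
    have FQm : iter m F (poly_op (Q m) H w) = - \sum_(i < m) iter i F (poly_op (Q i) H w).
      by apply/eqP; rewrite -addr_eq0 addrC sum0.
    have -> : c ^+ m *: iter m Om (poly_op Qm H w) =
        - \sum_(i < m) iter i F (poly_op (Q i) H w) -
        (iter m F (poly_op (Q m) H w) - c ^+ m *: iter m Om (poly_op Qm H w)).
      by rewrite FQm opprB addrC subrK.
    apply: poly_spanB (iterF_triangular m (Q m)); apply: poly_spanN.
    by apply: Fspan_sub_Ospan; exists Q.
  have /eqP : c ^+ m *: Qm = 0 by apply: (omega_top_free _ _ ZV_m); rewrite poly_opZ linearZZ.
  rewrite scaler_eq0 expf_eq0 invr_eq0 mulf_eq0 pnatr_eq0 (negbTE eta_neq0) andbF /=.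
  by rewrite comp_poly2_eq0 ?size_XaddC // => /eqP.
move=> i; rewrite ltnS leq_eqVlt => /predU1P[->//|lt_im].
apply: IH => // [r ZV_r size_r|]; first exact: ZV_m r ZV_r (leqW size_r).
by move: sum0; rewrite Qm0 poly_op0 linear0 addr0.
Qed.

Lemma omega_span_monic p n : p \is monic -> size p = n.+1 -> in_ZV u E F H p ->
  forall v, Ospan n v.
Proof.
move=> p_monic size_p ZV_p.
have top g : Ospan n (iter n Om (poly_op g H w)).
  have := ZV_p (poly_op g H w); rewrite (poly_op_widen n.+1) ?size_p // big_ord_recr /=.
  move/monicP: p_monic; rewrite /lead_coef size_p /= => -> /eqP.
  rewrite scale1r addrC addr_eq0 => /eqP ->; apply/poly_spanN/poly_span_sum => i _.
  exact/poly_spanZ/poly_span_gen.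
have Om_n x : Ospan n x -> Ospan n (Om x).
  apply: (poly_span_map Om) => k g lt_kn /=.
  move: lt_kn; rewrite leq_eqVlt => /predU1P[eq_kn|lt_kn]; last exact: (poly_span_gen _ k.+1).
  by have := top g; rewrite -eq_kn.
have gen_n k g : Ospan n (iter k Om (poly_op g H w)).
  have [lt_kn|/subnK <-] := ltnP k n; first exact: poly_span_gen.
  rewrite iterD; elim: (k - n)%N => [|j IH]; [exact: top | exact: Om_n].
move=> v; have [m v_m] := omega_span_exhaustive v.
by apply: (poly_span_map idfun) v_m => k g _; apply: gen_n.
Qed.

Theorem whittaker_basis_of_monic p n : p \is monic -> size p = n.+1 ->
  (forall q, in_ZV u E F H q <-> p %| q) ->
  is_basis_on (fun ij : nat * nat => (ij.1 < n)%N) (fun ij => iter ij.1 F (iter ij.2 H w)).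
Proof.
move=> p_monic size_p ZV_p.
have ZV_n r : in_ZV u E F H r -> (size r <= n)%N -> r = 0.
  move=> /ZV_p p_r size_r; apply/eqP; apply: contraT => r_neq0.
  by have := dvdp_leq r_neq0 p_r; rewrite size_p ltnNge size_r.
apply: (poly_span_basis (fun i => (i < n)%N)) => [i j le_ij|m Q lt_mn|v].
- exact: leq_ltn_trans.
- have le_mn : (m <= n)%N by case: m lt_mn => // m /(_ m (ltnSn m)).
  by apply: F_span_free => r ZV_r size_r; apply: ZV_n (leq_trans size_r le_mn).
- exists n => //; apply/Ospan_sub_Fspan/(omega_span_monic _ _ p_monic size_p).
  exact/ZV_p.
Qed.

Theorem whittaker_basis_of_ZV0 : (forall q, in_ZV u E F H q -> q = 0) ->
  is_basis_on (fun _ : nat * nat => true) (fun ij => iter ij.1 F (iter ij.2 H w)).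
Proof.
move=> ZV0; apply: (poly_span_basis predT) => // [m Q _|v].
  by apply: F_span_free => r /ZV0.
by have [m v_m] := omega_span_exhaustive v; exists m => //; apply: Ospan_sub_Fspan.
Qed.

End WhittakerModule.

Theorem mainTheorem14 (f u : {poly CC}) (V : lmodType CC)
    (E F H : {linear V -> V}) (eta : CC) (w : V) :
  is_Rf_module f E F H ->
  f = 2%:R^-1 *: (u \Po ('X + 1) - u) ->
  eta != 0 ->
  whittaker_module E F H eta w ->
  (forall (p : {poly CC}) (n : nat),
      p \is monic -> size p = n.+1 ->
      (forall q, in_ZV u E F H q <-> p %| q) ->
      is_basis_on (fun ij : nat * nat => (ij.1 < n)%N)
        (fun ij : nat * nat => iter ij.1 F (iter ij.2 H w))) /\
  ((forall q, in_ZV u E F H q -> q = 0) ->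
      is_basis_on (fun _ : nat * nat => true)
        (fun ij : nat * nat => iter ij.1 F (iter ij.2 H w))).
Proof.
move=> RfV f_u eta_neq0 whittaker_w; split.
  exact: (whittaker_basis_of_monic RfV f_u eta_neq0 whittaker_w).
exact: (whittaker_basis_of_ZV0 RfV f_u eta_neq0 whittaker_w).
Qed.
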